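(* Let the universe be $\mathbb{Z}$ and let $\mathcal{C}=\{\mathbb{Z}\setminus\{i\}\}_{i\in\mathbb{Z}}$. There is no algorithm that non-uniformly generates from $\mathcal{C}$ and whose generation times form a Pareto-optimal sequence.
   Context: Index the languages of $\mathcal{C}$ as $L_1,L_2,\ldots$ by any enumeration without repetition. An enumeration of a language $L$ is a sequence $x_1,x_2,\ldots$ with every $x_t\in L$ and every $x\in L$ equal to some $x_t$. A generating algorithm at each time $t\ge1$ receives $x_1,\ldots,x_t$ and outputs $z_t$; $S_t$ is the set of distinct strings among $x_1,\ldots,x_t$. An algorithm $\mathcal{G}$ non-uniformly generates from $\mathcal{C}$ if for every $i$ there is a finite $t(L_i)$ such that for every enumeration of $L_i$, $z_t\in L_i\setminus S_t$ whenever $|S_t|\ge t(L_i)$; its generation time $t_{\mathcal{G}}(L_i)$ is the least such value ($\infty$ if none). A sequence $t(L_1),t(L_2),\ldots$ is Pareto-optimal if every algorithm $\mathcal{G}$ that non-uniformly generates from $\mathcal{C}$ and satisfies $t_{\mathcal{G}}(L_i)<t(L_i)$ for some $i$ also satisfies $t_{\mathcal{G}}(L_j)>t(L_j)$ for some other $j$. *)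

From Stdlib Require Import ZArith List Arith.
Import ListNotations.
Open Scope Z_scope.

Definition language := Z -> Prop.

Definition Lang (i : Z) : language := fun x => x <> i.

Definition algorithm := list Z -> Z.

(* An enumeration of L (0-based: x 0, x 1, ... stands for x_1, x_2, ...). *)
Definition enumeration (L : language) (x : nat -> Z) : Prop :=
  (forall t, L (x t)) /\ (forall y, L y -> exists t, x t = y).

Definition prefix (x : nat -> Z) (t : nat) : list Z := map x (seq 0 t).

Definition card_S (x : nat -> Z) (t : nat) : nat :=
  length (nodup Z.eq_dec (prefix x t)).

Definition gen_ok (G : algorithm) (L : language) (T : nat) : Prop :=
  forall x, enumeration L x ->
  forall t : nat, (1 <= t)%nat -> (T <= card_S x t)%nat ->
    L (G (prefix x t)) /\ ~ In (G (prefix x t)) (prefix x t).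

Definition nonuniform_generates (G : algorithm) : Prop :=
  forall i, exists T, gen_ok G (Lang i) T.

Definition is_gen_time (G : algorithm) (L : language) (T : nat) : Prop :=
  gen_ok G L T /\ forall T', gen_ok G L T' -> (T <= T')%nat.

(* Pareto-optimality of a sequence t(L_i), i in Z. Every non-uniform generator
   has all generation times finite, so they are described by is_gen_time. *)
Definition pareto_optimal (tseq : Z -> nat) : Prop :=
  forall G', nonuniform_generates G' ->
  forall i Ti, is_gen_time G' (Lang i) Ti -> (Ti < tseq i)%nat ->
  exists j Tj, j <> i /\ is_gen_time G' (Lang j) Tj /\ (tseq j < Tj)%nat.

(* On a list u with enough distinct elements, the output of a generator G
   either lies in u, and then G fails on u for L_j with any j outside u, or is
   a new integer j, and then G fails on u for L_j itself.  So outside any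
   finite set there is an index whose generation time exceeds |u|.  Fix i with
   t_G(L_i) > 0 and repair G: whenever G would output i or an element of its
   input u, output instead an index h outside i :: u with t_G(L_h) > |u|.  The
   repaired algorithm never outputs i or a repeat, so it generates L_i from
   time 0, and on any L_j it is no slower than G, because h = j forces
   t_G(L_j) > |u|.  Hence G is strictly dominated. *)

From Stdlib Require Import ZArith List Lia.
Import ListNotations.
Open Scope Z_scope.

Definition count_distinct (u : list Z) : nat := length (nodup Z.eq_dec u).

Lemma count_distinct_ge (v u : list Z) :
  NoDup v -> incl v u -> (length v <= count_distinct u)%nat.
Proof.
  intros Hv Hvu. apply NoDup_incl_length; [exact Hv |].
  apply nodup_incl, Hvu.
Qed.

Definition fresh (s : list Z) : Z := 1 + fold_right Z.max 0 s.

Lemma fresh_notin (s : list Z) : ~ In (fresh s) s.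
Proof.
  assert (Hle : forall y, In y s -> y <= fold_right Z.max 0 s).
  { induction s as [| a s IH]; simpl; [tauto |].
    intros y [<- | Hy]; [| specialize (IH y Hy)]; lia. }
  intros Hin. specialize (Hle _ Hin). unfold fresh in Hle. lia.
Qed.

Definition Z_of_nat_zigzag (k : nat) : Z :=
  let z := Z.of_nat k in if z mod 2 =? 0 then z / 2 else - (z / 2) - 1.

Lemma Z_of_nat_zigzag_surj (y : Z) : exists k, Z_of_nat_zigzag k = y.
Proof.
  unfold Z_of_nat_zigzag.
  destruct (Z_le_gt_dec 0 y).
  - exists (Z.to_nat (2 * y)). rewrite Z2Nat.id by lia. cbv zeta.
    replace (2 * y mod 2) with 0 by (Z.div_mod_to_equations; lia).
    rewrite Z.eqb_refl. Z.div_mod_to_equations; lia.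
  - exists (Z.to_nat (- 2 * y - 1)). rewrite Z2Nat.id by lia. cbv zeta.
    replace ((- 2 * y - 1) mod 2) with 1 by (Z.div_mod_to_equations; lia).
    change (1 =? 0) with false. cbv iota. Z.div_mod_to_equations; lia.
Qed.

Lemma enumeration_Lang (j : Z) : exists e, enumeration (Lang j) e.
Proof.
  exists (fun k => if Z.eq_dec (Z_of_nat_zigzag k) j then j + 1
                   else Z_of_nat_zigzag k).
  split.
  - intros k. unfold Lang. destruct (Z.eq_dec (Z_of_nat_zigzag k) j); lia.
  - intros y Hy. destruct (Z_of_nat_zigzag_surj y) as [k <-].
    exists k. destruct (Z.eq_dec (Z_of_nat_zigzag k) j); [contradiction | reflexivity].
Qed.

(* The default value of [nth] supplies [e] once [u] is exhausted. *)
Definition prepend (u : list Z) (e : nat -> Z) : nat -> Z :=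
  fun n => nth n u (e (n - length u)%nat).

Lemma map_nth_seq (u : list Z) (d : nat -> Z) :
  map (fun n => nth n u (d n)) (seq 0 (length u)) = u.
Proof.
  revert d. induction u as [| a u IH]; intros d; simpl; [reflexivity |].
  f_equal. rewrite <- seq_shift, map_map. apply IH.
Qed.

Lemma prefix_prepend (u : list Z) (e : nat -> Z) :
  prefix (prepend u e) (length u) = u.
Proof. apply map_nth_seq. Qed.

Lemma enumeration_prepend (L : language) (u : list Z) (e : nat -> Z) :
  (forall y, In y u -> L y) -> enumeration L e -> enumeration L (prepend u e).
Proof.
  intros Hu [He He_onto]. unfold prepend. split.
  - intros n. destruct (Nat.lt_ge_cases n (length u)) as [Hn | Hn].
    + apply Hu, nth_In, Hn.
    + rewrite nth_overflow by exact Hn. apply He.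
  - intros y Hy. destruct (He_onto y Hy) as [k <-].
    exists (length u + k)%nat.
    rewrite nth_overflow by lia. f_equal. lia.
Qed.

Definition gen_ok_on_samples (G : algorithm) (j : Z) (T : nat) : Prop :=
  forall u, u <> [] -> ~ In j u -> (T <= count_distinct u)%nat ->
    G u <> j /\ ~ In (G u) u.

Lemma notin_prefix (j : Z) (x : nat -> Z) (t : nat) :
  enumeration (Lang j) x -> ~ In j (prefix x t).
Proof.
  intros [Hx _] Hin. unfold prefix in Hin.
  apply in_map_iff in Hin as [n [Hn _]]. exact (Hx n Hn).
Qed.

Lemma gen_ok_Lang_iff (G : algorithm) (j : Z) (T : nat) :
  gen_ok G (Lang j) T <-> gen_ok_on_samples G j T.
Proof.
  split.
  - intros HG u Hne Hj HT.
    destruct (enumeration_Lang j) as [e He].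
    assert (Hx : enumeration (Lang j) (prepend u e)).
    { apply enumeration_prepend; [| exact He].
      intros y Hy ->. contradiction. }
    assert (Hu : (1 <= length u)%nat) by (destruct u; [congruence | simpl; lia]).
    specialize (HG _ Hx (length u) Hu).
    unfold card_S in HG. rewrite prefix_prepend in HG. exact (HG HT).
  - intros HG x Hx t Ht HT. apply HG.
    + destruct t as [| t]; [lia | discriminate].
    + apply notin_prefix, Hx.
    + exact HT.
Qed.

Lemma gen_failure_count_lt (G : algorithm) (j : Z) (T : nat) (u : list Z) :
  gen_ok G (Lang j) T -> u <> [] -> ~ In j u -> (G u = j \/ In (G u) u) ->
  (count_distinct u < T)%nat.
Proof.
  intros HG Hne Hj Hfail.
  destruct (Nat.lt_ge_cases (count_distinct u) T) as [Hlt | Hge]; [exact Hlt |].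
  apply gen_ok_Lang_iff in HG. destruct (HG u Hne Hj Hge). tauto.
Qed.

(* The padding gives the list more than [c] distinct elements. *)
Definition hard_index (G : algorithm) (s : list Z) (c : nat) : Z :=
  let u := s ++ map Z.of_nat (seq 0 (S c)) in
  if in_dec Z.eq_dec (G u) u then fresh u else G u.

Lemma hard_index_notin (G : algorithm) (s : list Z) (c : nat) :
  ~ In (hard_index G s c) s.
Proof.
  unfold hard_index. cbv zeta.
  destruct (in_dec Z.eq_dec _ _) as [_ | Hout]; intros Hin.
  - apply (fresh_notin (s ++ map Z.of_nat (seq 0 (S c)))), in_or_app. tauto.
  - apply Hout, in_or_app. tauto.
Qed.

Lemma hard_index_gen_time (G : algorithm) (s : list Z) (c T : nat) :
  gen_ok G (Lang (hard_index G s c)) T -> (c < T)%nat.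
Proof.
  unfold hard_index. cbv zeta.
  set (pad := map Z.of_nat (seq 0 (S c))). set (u := s ++ pad).
  assert (Hcount : (S c <= count_distinct u)%nat).
  { replace (S c) with (length pad) by (unfold pad; rewrite length_map, length_seq; reflexivity).
    apply count_distinct_ge.
    - apply NoDup_map_NoDup_ForallPairs; [intros a b _ _; lia | apply seq_NoDup].
    - intros y Hy. apply in_or_app. tauto. }
  assert (Hne : u <> []) by (unfold u, pad; destruct s; discriminate).
  intros HG. enough (count_distinct u < T)%nat by lia.
  destruct (in_dec Z.eq_dec (G u) u) as [Hin | Hout].
  - apply (gen_failure_count_lt G (fresh u)); auto using fresh_notin.
  - apply (gen_failure_count_lt G (G u)); auto.
Qed.

Definition repair (G : algorithm) (i : Z) : algorithm :=
  fun u => if in_dec Z.eq_dec (G u) (i :: u)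
           then hard_index G (i :: u) (count_distinct u) else G u.

Lemma repair_avoids (G : algorithm) (i : Z) (u : list Z) :
  repair G i u <> i /\ ~ In (repair G i u) u.
Proof.
  unfold repair. destruct (in_dec Z.eq_dec (G u) (i :: u)) as [_ | Hout].
  - pose proof (hard_index_notin G (i :: u) (count_distinct u)) as H.
    split; intros Hin; apply H; simpl; auto.
  - split; intros Hin; apply Hout; simpl; auto.
Qed.

Lemma gen_ok_repair_self (G : algorithm) (i : Z) : gen_ok (repair G i) (Lang i) 0.
Proof.
  apply gen_ok_Lang_iff. intros u _ _ _. apply repair_avoids.
Qed.

Lemma gen_ok_repair (G : algorithm) (i j : Z) (T : nat) :
  gen_ok G (Lang j) T -> gen_ok (repair G i) (Lang j) T.
Proof.
  intros HG. pose proof HG as HGs. apply gen_ok_Lang_iff in HGs.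
  apply gen_ok_Lang_iff. intros u Hne Hj HT.
  destruct (repair_avoids G i u) as [_ Hnew]. split; [| exact Hnew].
  unfold repair. destruct (in_dec Z.eq_dec (G u) (i :: u)) as [_ | _].
  - intros Hh. rewrite <- Hh in HG.
    apply hard_index_gen_time in HG. lia.
  - apply (HGs u Hne Hj HT).
Qed.

Theorem mainTheorem4 :
  ~ exists (G : algorithm) (tG : Z -> nat),
      nonuniform_generates G /\
      (forall i, is_gen_time G (Lang i) (tG i)) /\
      pareto_optimal tG.
Proof.
  intros [G [tG [_ [HtG Hpareto]]]].
  set (i := hard_index G [] 0).
  assert (Hi : (0 < tG i)%nat) by apply (hard_index_gen_time G [] 0), HtG.
  assert (Hrep : forall j, gen_ok (repair G i) (Lang j) (tG j))
    by (intros j; apply gen_ok_repair, HtG).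
  assert (Hnu : nonuniform_generates (repair G i)) by (intros j; exists (tG j); apply Hrep).
  assert (Hi0 : is_gen_time (repair G i) (Lang i) 0)
    by (split; [apply gen_ok_repair_self | intros; lia]).
  destruct (Hpareto (repair G i) Hnu i 0%nat Hi0 Hi) as [j [Tj [_ [[_ Hmin] Hlt]]]].
  specialize (Hmin _ (Hrep j)). lia.
Qed.
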